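(* The functions $G_1(\zeta)=\sum_{n=0}^\infty A_n\zeta^{4+n}$ and $G_2(\zeta)=\sum_{n=0}^\infty B_n\zeta^{n-3}$ are two linearly independent solutions on the circle $\{|\zeta|=r\}$ of $G''+12Y_0G=0$, where $Y_0(\zeta)=-\zeta^{-2}+\zeta^2P(\zeta)$, and their Wronskian is $G_1G_2'-G_2G_1'=-7$.
   Context: $r=\tfrac{7}{10}$, $x_0=-\tfrac{770766}{323285}$; $a_0=-x_0/10$, $a_1=-1/6$, $a_2=\tfrac{19949}{321055}$, $a_3=0$, $a_n=-\tfrac{6}{(n+5)(n-2)}\sum_{k=0}^{n-4}a_ka_{n-4-k}$ for $4\le n\le17$, and $P(\zeta)=\sum_{n=0}^{17}a_n\zeta^n$. $A_0=1$, $A_1=A_2=A_3=0$, $A_n=-\tfrac{12}{n(n+7)}\sum_{k=0}^{\min\{n-4,17\}}a_kA_{n-4-k}$ ($n\ge4$); $B_0=1$, $B_1=B_2=B_3=B_7=0$, $B_n=-\tfrac{12}{n(n-7)}\sum_{k=0}^{\min\{n-4,17\}}a_kB_{n-4-k}$ ($n\ge4$, $n\neq7$). *)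

From Stdlib Require Import Reals List Arith.
From Coquelicot Require Import Coquelicot.
Import ListNotations.
Open Scope R_scope.

Definition r : R := 7 / 10.
Definition x0 : R := - (770766 / 323285).

(* a_0..a_17 by the stated recursion; a_n for n > 17 is never used. *)
Definition a_step (l : list R) (n : nat) : R :=
  match n with
  | 0%nat => - x0 / 10
  | 1%nat => - (1 / 6)
  | 2%nat => 19949 / 321055
  | 3%nat => 0
  | _ => - (6 / ((INR n + 5) * (INR n - 2))) *
         sum_f_R0 (fun k => nth k l 0 * nth (n - 4 - k) l 0) (n - 4)
  end.

Fixpoint a_list (n : nat) : list R :=
  match n with
  | 0%nat => [a_step [] 0]
  | S m => a_list m ++ [a_step (a_list m) (S m)]
  end.

Definition a (n : nat) : R := nth n (a_list n) 0.

Definition A_step (l : list R) (n : nat) : R :=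
  match n with
  | 0%nat => 1
  | 1%nat | 2%nat | 3%nat => 0
  | _ => - (12 / (INR n * (INR n + 7))) *
         sum_f_R0 (fun k => a k * nth (n - 4 - k) l 0) (Nat.min (n - 4) 17)
  end.

Fixpoint A_list (n : nat) : list R :=
  match n with
  | 0%nat => [A_step [] 0]
  | S m => A_list m ++ [A_step (A_list m) (S m)]
  end.

Definition A (n : nat) : R := nth n (A_list n) 0.

Definition B_step (l : list R) (n : nat) : R :=
  match n with
  | 0%nat => 1
  | 1%nat | 2%nat | 3%nat | 7%nat => 0
  | _ => - (12 / (INR n * (INR n - 7))) *
         sum_f_R0 (fun k => a k * nth (n - 4 - k) l 0) (Nat.min (n - 4) 17)
  end.

Fixpoint B_list (n : nat) : list R :=
  match n with
  | 0%nat => [B_step [] 0]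
  | S m => B_list m ++ [B_step (B_list m) (S m)]
  end.

Definition B (n : nat) : R := nth n (B_list n) 0.

Definition P (z : C) : C := sum_n (fun n => Cmult (RtoC (a n)) (Cpow z n)) 17.

Definition Y0 (z : C) : C :=
  Cplus (Copp (Cinv (Cpow z 2))) (Cmult (Cpow z 2) (P z)).

(* Terms of the two series; zeta^(n-3) (integer exponent) is written zeta^n / zeta^3. *)
Definition G1_term (z : C) (n : nat) : C := Cmult (RtoC (A n)) (Cpow z (4 + n)).
Definition G2_term (z : C) (n : nat) : C :=
  Cmult (RtoC (B n)) (Cdiv (Cpow z n) (Cpow z 3)).

Definition CSeries (u : nat -> C) : C :=
  (Series (fun n => fst (u n)), Series (fun n => snd (u n))).

Definition G1 (z : C) : C := CSeries (G1_term z).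
Definition G2 (z : C) : C := CSeries (G2_term z).

Definition solves_at (G : C -> C) (z : C) : Prop :=
  (exists eps : posreal, forall w : C, Cmod (Cminus w z) < eps ->
       @is_derive C_AbsRing C_NormedModule G w (C_derive G w)) /\
  @is_derive C_AbsRing C_NormedModule (C_derive G) z (C_derive (C_derive G) z) /\
  Cplus (C_derive (C_derive G) z) (Cmult (RtoC 12) (Cmult (Y0 z) (G z))) = RtoC 0.

(* Write G1 = z^4 g_A and G2 = z^-3 g_B with g_A = sum A_n z^n, g_B = sum B_n z^n.
   The recursions divide by a quadratic in n while convolving with the 18 fixed
   coefficients a_k, so A_n and B_n decay faster than any geometric sequence: g_A and
   g_B are entire and may be differentiated termwise.  Since 4 and -3 are the roots of
   mu (mu - 1) = 12, the ansatz z^mu g turns G'' + 12 Y0 G = 0 into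
   2 mu g' + z g'' + 12 z^3 P g = 0, which is exactly the recursion for A (mu = 4) and
   for B (mu = -3).
   The Wronskian equals -7 g_A g_B + z (g_A g_B' - g_B g_A'), an entire function whose
   derivative vanishes by the two equations; hence it is its value -7 A_0 B_0 = -7 at 0.
   If c1 G1 + c2 G2 vanishes on the circle, so does its derivative at r (take the
   difference quotient along the circle), and the Wronskian then forces c1 = c2 = 0. *)

From Stdlib Require Import Reals Lra Lia List Arith FunctionalExtensionality.
From Coquelicot Require Import Coquelicot.
Import ListNotations.
Open Scope R_scope.

(* On [C] Coquelicot has two normed-module structures, [C_NormedModule] (used in
   [solves_at]) and [AbsRing_NormedModule C_AbsRing] (used by its calculus lemmas);
   [is_derive] on [C -> C] may elaborate to either. *)
Notation is_C_derive f z l := (@is_derive C_AbsRing C_NormedModule f z l).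

(* [ring] and [field] need the carrier to be syntactically [C], not a structure
   projection such as [AbelianMonoid.sort C_NormedModule]. *)
Ltac C_ring := match goal with |- @eq _ ?x ?y => change (@eq C x y) end; ring.
Ltac C_field := match goal with |- @eq _ ?x ?y => change (@eq C x y) end; field.

Lemma sum_n_fst (u : nat -> C) (n : nat) :
  sum_n (fun k => fst (u k)) n = fst (sum_n u n).
Proof.
  induction n as [|n IH]; [now rewrite !sum_O|].
  now rewrite !sum_Sn, IH.
Qed.

Lemma sum_n_snd (u : nat -> C) (n : nat) :
  sum_n (fun k => snd (u k)) n = snd (sum_n u n).
Proof.
  induction n as [|n IH]; [now rewrite !sum_O|].
  now rewrite !sum_Sn, IH.
Qed.

Lemma is_series_fst (u : nat -> C) (l : C) :
  is_series u l -> is_series (fun n => fst (u n)) (fst l).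
Proof.
  intros H. apply filterlim_locally. intros eps.
  eapply filter_imp; [| exact (proj1 (filterlim_locally _ _) H eps)].
  intros n [H1 _]. now rewrite sum_n_fst.
Qed.

Lemma is_series_snd (u : nat -> C) (l : C) :
  is_series u l -> is_series (fun n => snd (u n)) (snd l).
Proof.
  intros H. apply filterlim_locally. intros eps.
  eapply filter_imp; [| exact (proj1 (filterlim_locally _ _) H eps)].
  intros n [_ H2]. now rewrite sum_n_snd.
Qed.

Lemma CSeries_unique (u : nat -> C) (l : C) : is_series u l -> CSeries u = l.
Proof.
  intros H. unfold CSeries.
  rewrite (is_series_unique _ _ (is_series_fst _ _ H)),
    (is_series_unique _ _ (is_series_snd _ _ H)).
  now destruct l.
Qed.

Lemma Cmod_series_le (u : nat -> C) (l : C) (b : nat -> R) (L : R) :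
  is_series u l -> (forall n, Cmod (u n) <= b n) -> is_series b L -> Cmod l <= L.
Proof.
  intros Hu Hb HL.
  assert (Hlim : is_lim_seq (fun n => norm (sum_n u n)) (norm l)).
  { eapply filterlim_comp; [exact Hu | apply filterlim_norm]. }
  assert (Hle : forall n, norm (sum_n u n) <= sum_n b n).
  { intros n. unfold sum_n. eapply Rle_trans.
    - exact (@norm_sum_n_m _ C_NormedModule u 0 n).
    - apply sum_n_m_le, Hb. }
  exact (is_lim_seq_le _ _ _ _ Hle Hlim (HL : is_lim_seq (sum_n b) L)).
Qed.

Lemma is_series_C0 : is_series (fun _ => RtoC 0) (RtoC 0).
Proof.
  apply filterlim_ext with (fun _ => RtoC 0); [| apply filterlim_const].
  intros n. induction n as [|n IH]; [now rewrite sum_O|].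
  rewrite sum_Sn, <- IH. apply injective_projections; simpl; lra.
Qed.

Definition entire_coef (c : nat -> R) : Prop :=
  forall q, 0 < q -> exists M, 0 <= M /\ forall n, Rabs (c n) <= M * q ^ n.

Definition CPS_term (c : nat -> R) (z : C) (n : nat) : C := (c n * z ^ n)%C.
Definition CPS (c : nat -> R) (z : C) : C := CSeries (CPS_term c z).
Definition dcoef (c : nat -> R) (n : nat) : R := INR (S n) * c (S n).

Lemma INR_S_le_pow2 (n : nat) : INR (S n) <= 2 ^ n.
Proof.
  induction n as [|n IH]; [simpl; lra|].
  rewrite S_INR. assert (1 <= 2 ^ n) by (apply pow_R1_Rle; lra).
  change (2 ^ S n) with (2 * 2 ^ n). lra.
Qed.

Lemma Cmod_CPS_term (c : nat -> R) (z : C) (n : nat) :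
  Cmod (CPS_term c z n) = Rabs (c n) * Cmod z ^ n.
Proof. unfold CPS_term. now rewrite Cmod_mult, Cmod_R, Cmod_pow. Qed.

Lemma is_series_CPS (c : nat -> R) (z : C) :
  entire_coef c -> is_series (CPS_term c z) (CPS c z).
Proof.
  intros Hc.
  set (q := / (2 * (Cmod z + 1))).
  pose proof (Cmod_ge_0 z) as Hz.
  assert (Hq : 0 < q) by (apply Rinv_0_lt_compat; lra).
  destruct (Hc q Hq) as [M [HM HMb]].
  assert (Hqz : 0 <= q * Cmod z < 1 / 2).
  { assert (q * (2 * (Cmod z + 1)) = 1) by (unfold q; field; lra). nra. }
  assert (Hb : forall n, norm (CPS_term c z n) <= M * (q * Cmod z) ^ n).
  { intros n. change (Cmod (CPS_term c z n) <= M * (q * Cmod z) ^ n).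
    rewrite Cmod_CPS_term, Rpow_mult_distr, <- Rmult_assoc.
    apply Rmult_le_compat_r; [apply pow_le; lra | apply HMb]. }
  assert (Hgeom : ex_series (fun n => M * (q * Cmod z) ^ n)).
  { apply (@ex_series_scal R_AbsRing R_NormedModule), ex_series_geom.
    rewrite Rabs_pos_eq; lra. }
  destruct (@ex_series_le C_AbsRing C_CompleteNormedModule _ _ Hb Hgeom) as [l Hl].
  unfold CPS. now rewrite (CSeries_unique _ _ Hl).
Qed.

Lemma entire_coef_dcoef (c : nat -> R) : entire_coef c -> entire_coef (dcoef c).
Proof.
  intros Hc q Hq.
  destruct (Hc (q / 2)) as [M [HM HMb]]; [lra|].
  exists (M * (q / 2)). split; [apply Rmult_le_pos; lra|]. intros n.
  unfold dcoef. rewrite Rabs_mult, Rabs_pos_eq by apply pos_INR.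
  assert (Hq2 : 0 <= (q / 2) ^ S n) by (apply pow_le; lra).
  apply Rle_trans with (2 ^ n * (M * (q / 2) ^ S n)).
  - apply Rmult_le_compat; auto using pos_INR, Rabs_pos, INR_S_le_pow2.
  - rewrite <- tech_pow_Rmult. replace (q ^ n) with (2 ^ n * (q / 2) ^ n)
      by (rewrite <- Rpow_mult_distr; f_equal; field).
    right; ring.
Qed.

Lemma entire_coef_remainder_summable (c : nat -> R) (rho : R) :
  entire_coef c -> 0 < rho ->
  ex_series (fun n => Rabs (c (S n)) * INR (S n) ^ 2 * rho ^ n).
Proof.
  intros Hc Hr.
  set (q := / (8 * rho)).
  assert (Hq : 0 < q) by (apply Rinv_0_lt_compat; lra).
  destruct (Hc q Hq) as [M [HM HMb]].
  apply (@ex_series_le R_AbsRing R_CompleteNormedModule _ (fun n => M * q * (/ 2) ^ n)).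
  - intros n. change (Rabs (Rabs (c (S n)) * INR (S n) ^ 2 * rho ^ n) <= M * q * (/ 2) ^ n).
    assert (Hn : INR (S n) ^ 2 <= 4 ^ n).
    { replace (4 ^ n) with ((2 ^ n) ^ 2)
        by (rewrite <- pow_mult, Nat.mul_comm, pow_mult; f_equal; simpl; lra).
      apply pow_incr. split; [apply pos_INR | apply INR_S_le_pow2]. }
    assert (Hcn : Rabs (c (S n)) <= M * q * q ^ n) by (rewrite Rmult_assoc; apply HMb).
    assert (Hhalf : / 2 = 4 * q * rho) by (unfold q; field; lra).
    assert (0 <= rho ^ n) by (apply pow_le; lra).
    assert (0 <= q ^ n) by (apply pow_le; lra).
    assert (0 <= INR (S n) ^ 2) by (apply pow_le, pos_INR).
    rewrite Hhalf, !Rpow_mult_distr, Rabs_pos_eq.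
    2: { apply Rmult_le_pos; [apply Rmult_le_pos|]; auto using Rabs_pos. }
    apply Rle_trans with (M * q * q ^ n * (4 ^ n * rho ^ n)); [| right; ring].
    rewrite Rmult_assoc. apply Rmult_le_compat; auto using Rabs_pos.
    + apply Rmult_le_pos; auto.
    + apply Rmult_le_compat_r; auto.
  - apply (@ex_series_scal R_AbsRing R_NormedModule), ex_series_geom.
    rewrite Rabs_pos_eq; lra.
Qed.

Definition pow_remainder (w z : C) (n : nat) : C :=
  (w ^ S n - z ^ S n - INR (S n) * z ^ n * (w - z))%C.

Lemma pow_remainder_0 (w z : C) : pow_remainder w z 0 = RtoC 0.
Proof. unfold pow_remainder. simpl. ring. Qed.

Lemma pow_remainder_S (w z : C) (n : nat) :
  pow_remainder w z (S n) =
  (w * pow_remainder w z n + INR (S n) * z ^ n * ((w - z) * (w - z)))%C.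
Proof. unfold pow_remainder. rewrite (S_INR (S n)), RtoC_plus. simpl. ring. Qed.

Lemma Cmod_pow_remainder_le (w z : C) (rho : R) (n : nat) :
  1 <= rho -> Cmod w <= rho -> Cmod z <= rho ->
  Cmod (pow_remainder w z n) <= INR (S n) ^ 2 * rho ^ n * Cmod (w - z) ^ 2.
Proof.
  intros Hr Hw Hz. set (d := Cmod (w - z)).
  assert (Hd : 0 <= d) by apply Cmod_ge_0.
  induction n as [|n IH].
  - rewrite pow_remainder_0, Cmod_0. simpl. nra.
  - rewrite pow_remainder_S.
    set (k := INR (S n)). assert (Hk : 0 <= k) by apply pos_INR.
    assert (Hp : 0 <= rho ^ n) by (apply pow_le; lra).
    assert (Hzn : Cmod z ^ n <= rho ^ n).
    { apply pow_incr. split; [apply Cmod_ge_0 | exact Hz]. }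
    assert (Hstep : Cmod (w * pow_remainder w z n + k * z ^ n * ((w - z) * (w - z)))%C
                    <= rho * (k ^ 2 * rho ^ n * d ^ 2) + k * rho ^ n * (d * d)).
    { eapply Rle_trans; [apply Cmod_triangle|].
      rewrite !Cmod_mult, Cmod_R, Rabs_pos_eq, Cmod_pow by exact Hk.
      apply Rplus_le_compat.
      - apply Rmult_le_compat; auto using Cmod_ge_0.
      - apply Rmult_le_compat_r; [nra|]. apply Rmult_le_compat_l; auto. }
    eapply Rle_trans; [exact Hstep|].
    unfold k. rewrite (S_INR (S n)). fold k. simpl (rho ^ S n).
    assert (HX : 0 <= rho ^ n * d ^ 2) by (apply Rmult_le_pos; [lra | apply pow2_ge_0]).
    assert (0 <= k * (rho ^ n * d ^ 2) * (rho - 1)) by (apply Rmult_le_pos; nra).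
    assert (0 <= k * rho * (rho ^ n * d ^ 2)) by (apply Rmult_le_pos; nra).
    assert (0 <= rho * (rho ^ n * d ^ 2)) by nra.
    nra.
Qed.

Lemma is_series_CPS_remainder (c : nat -> R) (w z : C) :
  entire_coef c ->
  is_series (fun n => (c (S n) * pow_remainder w z n)%C)
            (CPS c w - CPS c z - (w - z) * CPS (dcoef c) z)%C.
Proof.
  intros Hc.
  assert (Hshift : forall x, is_series (fun n => CPS_term c x (S n)) (CPS c x - c 0%nat)%C).
  { intros x. apply is_series_incr_1.
    match goal with |- is_series _ ?l => replace l with (CPS c x) end.
    { apply is_series_CPS, Hc. }
    unfold CPS_term. simpl. change plus with Cplus. ring. }
  pose proof (is_series_scal (w - z)%C _ _ (is_series_CPS _ z (entire_coef_dcoef _ Hc))) as Hd.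
  pose proof (is_series_minus _ _ _ _ (is_series_minus _ _ _ _ (Hshift w) (Hshift z)) Hd) as H.
  replace (CPS c w - CPS c z - (w - z) * CPS (dcoef c) z)%C
    with (CPS c w - c 0%nat - (CPS c z - c 0%nat) - (w - z) * CPS (dcoef c) z)%C by ring.
  eapply is_series_ext; [| exact H].
  intros n. unfold CPS_term, dcoef, pow_remainder. rewrite RtoC_mult, !Cpow_S.
  change plus with Cplus. change opp with Copp. change scal with Cmult. C_ring.
Qed.

Lemma is_C_derive_of_quadratic_remainder (f : C -> C) (z l : C) (K del : R) :
  0 < del ->
  (forall w, Cmod (w - z)%C < del ->
     Cmod (f w - f z - (w - z) * l)%C <= K * Cmod (w - z)%C ^ 2) ->
  is_C_derive f z l.
Proof.
  intros Hdel Hf. split; [apply is_linear_scal_l|].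
  intros x Hx.
  apply (@is_filter_lim_locally_unique C_AbsRing (AbsRing_NormedModule C_AbsRing)) in Hx.
  subst x. intros eps.
  set (K1 := Rabs K + 1).
  assert (HK1 : 0 < K1) by (unfold K1; pose proof (Rabs_pos K); lra).
  assert (Hdel' : 0 < Rmin del (eps / K1)).
  { apply Rmin_pos; [lra | apply Rdiv_lt_0_compat; [apply cond_pos | exact HK1]]. }
  exists (mkposreal _ Hdel'). intros w Hw.
  change (Cmod (w - z)%C < Rmin del (eps / K1)) in Hw.
  change (Cmod (f w - f z - (w - z) * l)%C <= eps * Cmod (w - z)%C).
  assert (Hd : 0 <= Cmod (w - z)%C) by apply Cmod_ge_0.
  assert (HKd : K1 * Cmod (w - z)%C <= eps).
  { assert (H : Cmod (w - z)%C <= eps / K1)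
      by (left; eapply Rlt_le_trans; [exact Hw | apply Rmin_r]).
    apply Rmult_le_compat_l with (r := K1) in H; [| lra].
    replace (K1 * (eps / K1)) with (pos eps) in H by (field; lra). exact H. }
  eapply Rle_trans; [apply Hf; eapply Rlt_le_trans; [exact Hw | apply Rmin_l]|].
  assert (K <= K1) by (unfold K1; pose proof (Rle_abs K); lra).
  simpl. nra.
Qed.

Lemma is_derive_CPS (c : nat -> R) (z : C) :
  entire_coef c -> is_C_derive (CPS c) z (CPS (dcoef c) z).
Proof.
  intros Hc.
  set (rho := Cmod z + 1).
  pose proof (Cmod_ge_0 z) as Hz0.
  destruct (entire_coef_remainder_summable c rho Hc) as [K HK]; [unfold rho; lra|].
  apply (is_C_derive_of_quadratic_remainder _ _ _ K 1); [lra|]. intros w Hw.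
  assert (Hwr : Cmod w <= rho).
  { replace w with (z + (w - z))%C by ring.
    eapply Rle_trans; [apply Cmod_triangle|]. unfold rho. lra. }
  assert (Hb : forall n, Cmod (c (S n) * pow_remainder w z n)%C
                 <= Rabs (c (S n)) * INR (S n) ^ 2 * rho ^ n * Cmod (w - z)%C ^ 2).
  { intros n. rewrite Cmod_mult, Cmod_R, !Rmult_assoc.
    apply Rmult_le_compat_l; [apply Rabs_pos|]. rewrite <- Rmult_assoc.
    apply Cmod_pow_remainder_le; [unfold rho; lra | exact Hwr | unfold rho; lra]. }
  exact (Cmod_series_le _ _ _ _ (is_series_CPS_remainder c w z Hc) Hb
           (is_series_scal_r _ _ _ HK)).
Qed.

Definition shift1 (c : nat -> R) (n : nat) : R :=
  match n with O => 0 | S m => c m end.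
Definition shiftk (k : nat) (c : nat -> R) (n : nat) : R :=
  if Nat.leb k n then c (n - k)%nat else 0.
Definition conv (b : nat -> R) (N : nat) (c : nat -> R) (n : nat) : R :=
  sum_f_R0 (fun k => if Nat.leb k n then b k * c (n - k)%nat else 0) N.

Lemma shiftk_0 (c : nat -> R) (n : nat) : shiftk 0 c n = c n.
Proof. unfold shiftk. simpl. now rewrite Nat.sub_0_r. Qed.

Lemma shiftk_S (k : nat) (c : nat -> R) (n : nat) : shiftk (S k) c n = shift1 (shiftk k c) n.
Proof.
  unfold shiftk, shift1. destruct n as [|n]; [reflexivity|]. simpl. now destruct (Nat.leb k n).
Qed.

Lemma conv_0 (b c : nat -> R) (n : nat) : conv b 0 c n = b 0%nat * c n.
Proof. unfold conv. simpl. now rewrite Nat.sub_0_r. Qed.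

Lemma conv_S (b : nat -> R) (N : nat) (c : nat -> R) (n : nat) :
  conv b (S N) c n = conv b N c n + b (S N) * shiftk (S N) c n.
Proof. unfold conv, shiftk. rewrite tech5. destruct (Nat.leb (S N) n); ring. Qed.

Lemma conv_min (b : nat -> R) (N : nat) (c : nat -> R) (n : nat) :
  conv b N c n = sum_f_R0 (fun k => b k * c (n - k)%nat) (Nat.min n N).
Proof.
  unfold conv. induction N as [|N IH]; [now rewrite Nat.min_0_r|].
  rewrite tech5, IH. destruct (Nat.leb (S N) n) eqn:E.
  - apply Nat.leb_le in E. rewrite !Nat.min_r by lia. now rewrite tech5.
  - apply Nat.leb_gt in E. rewrite !Nat.min_l by lia. ring.
Qed.

Lemma entire_coef_ext (c d : nat -> R) : (forall n, c n = d n) -> entire_coef c -> entire_coef d.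
Proof.
  intros E Hc q Hq. destruct (Hc q Hq) as [M [HM H]].
  exists M. split; [exact HM|]. intros n. rewrite <- E. apply H.
Qed.

Lemma entire_coef_plus (c d : nat -> R) :
  entire_coef c -> entire_coef d -> entire_coef (fun n => c n + d n).
Proof.
  intros Hc Hd q Hq. destruct (Hc q Hq) as [M1 [HM1 H1]], (Hd q Hq) as [M2 [HM2 H2]].
  exists (M1 + M2). split; [lra|]. intros n.
  eapply Rle_trans; [apply Rabs_triang|]. specialize (H1 n). specialize (H2 n). lra.
Qed.

Lemma entire_coef_scal (k : R) (c : nat -> R) :
  entire_coef c -> entire_coef (fun n => k * c n).
Proof.
  intros Hc q Hq. destruct (Hc q Hq) as [M [HM H]].
  exists (Rabs k * M). split; [apply Rmult_le_pos; auto using Rabs_pos|]. intros n.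
  rewrite Rabs_mult, Rmult_assoc. apply Rmult_le_compat_l; auto using Rabs_pos.
Qed.

Lemma entire_coef_shift1 (c : nat -> R) : entire_coef c -> entire_coef (shift1 c).
Proof.
  intros Hc q Hq. destruct (Hc q Hq) as [M [HM H]].
  exists (M / q). split; [apply Rdiv_le_0_compat; lra|]. intros [|n]; simpl.
  - rewrite Rabs_R0. apply Rmult_le_pos; [apply Rdiv_le_0_compat|]; lra.
  - eapply Rle_trans; [apply H|]. right. field. lra.
Qed.

Lemma entire_coef_shiftk (k : nat) (c : nat -> R) : entire_coef c -> entire_coef (shiftk k c).
Proof.
  intros Hc. induction k as [|k IH].
  - exact (entire_coef_ext _ _ (fun n => eq_sym (shiftk_0 c n)) Hc).
  - apply (entire_coef_ext (shift1 (shiftk k c))); [intros n; now rewrite shiftk_S|].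
    now apply entire_coef_shift1.
Qed.

Lemma entire_coef_conv (b : nat -> R) (N : nat) (c : nat -> R) :
  entire_coef c -> entire_coef (conv b N c).
Proof.
  intros Hc. induction N as [|N IH].
  - apply (entire_coef_ext (fun n => b 0%nat * c n)); [intros n; now rewrite conv_0|].
    now apply entire_coef_scal.
  - apply (entire_coef_ext (fun n => conv b N c n + b (S N) * shiftk (S N) c n)).
    { intros n. now rewrite conv_S. }
    apply entire_coef_plus; [exact IH|]. now apply entire_coef_scal, entire_coef_shiftk.
Qed.

Lemma CPS_ext (c d : nat -> R) (z : C) : (forall n, c n = d n) -> CPS c z = CPS d z.
Proof.
  intros E. unfold CPS, CSeries, CPS_term.
  f_equal; apply Series_ext; intros n; now rewrite E.
Qed.

Lemma CPS_plus (c d : nat -> R) (z : C) : entire_coef c -> entire_coef d ->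
  CPS (fun n => c n + d n) z = (CPS c z + CPS d z)%C.
Proof.
  intros Hc Hd. apply CSeries_unique.
  eapply is_series_ext;
    [| exact (is_series_plus _ _ _ _ (is_series_CPS c z Hc) (is_series_CPS d z Hd))].
  intros n. unfold CPS_term. rewrite RtoC_plus. change plus with Cplus. C_ring.
Qed.

Lemma CPS_scal (k : R) (c : nat -> R) (z : C) : entire_coef c ->
  CPS (fun n => k * c n) z = (k * CPS c z)%C.
Proof.
  intros Hc. apply CSeries_unique.
  eapply is_series_ext; [| exact (is_series_scal (RtoC k) _ _ (is_series_CPS c z Hc))].
  intros n. unfold CPS_term. rewrite RtoC_mult. change scal with Cmult. C_ring.
Qed.

Lemma CPS_shift1 (c : nat -> R) (z : C) : entire_coef c -> CPS (shift1 c) z = (z * CPS c z)%C.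
Proof.
  intros Hc. apply CSeries_unique, is_series_decr_1.
  match goal with |- is_series _ ?l => replace l with (z * CPS c z)%C end.
  - eapply is_series_ext; [| exact (is_series_scal z _ _ (is_series_CPS c z Hc))].
    intros n. unfold CPS_term. simpl. change scal with Cmult. C_ring.
  - unfold CPS_term. simpl. change plus with Cplus. change opp with Copp. C_ring.
Qed.

Lemma CPS_shiftk (k : nat) (c : nat -> R) (z : C) : entire_coef c ->
  CPS (shiftk k c) z = (z ^ k * CPS c z)%C.
Proof.
  intros Hc. induction k as [|k IH].
  - rewrite (CPS_ext _ c) by apply shiftk_0. simpl. ring.
  - rewrite (CPS_ext _ (shift1 (shiftk k c))) by apply shiftk_S.
    rewrite CPS_shift1, IH by now apply entire_coef_shiftk. simpl. ring.
Qed.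

Lemma CPS_conv (b : nat -> R) (N : nat) (c : nat -> R) (z : C) : entire_coef c ->
  (sum_n (fun k => b k * z ^ k) N * CPS c z)%C = CPS (conv b N c) z.
Proof.
  intros Hc. induction N as [|N IH].
  - rewrite sum_O, (CPS_ext (conv b 0 c) (fun n => b 0%nat * c n)), CPS_scal by (auto using conv_0).
    simpl. ring.
  - rewrite sum_Sn, (CPS_ext _ _ _ (conv_S b N c)), CPS_plus, CPS_scal, CPS_shiftk, <- IH;
      auto using entire_coef_conv, entire_coef_scal, entire_coef_shiftk.
    change plus with Cplus. C_ring.
Qed.

Lemma CPS_eq_0 (c : nat -> R) (z : C) : (forall n, c n = 0) -> CPS c z = RtoC 0.
Proof.
  intros H. apply CSeries_unique. eapply is_series_ext; [| exact is_series_C0].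
  intros n. unfold CPS_term. rewrite H. C_ring.
Qed.

Lemma CPS_at_0 (c : nat -> R) : CPS c (RtoC 0) = RtoC (c O).
Proof.
  apply CSeries_unique, is_series_decr_1.
  match goal with |- is_series _ ?l => replace l with (RtoC 0) end.
  - eapply is_series_ext; [| exact is_series_C0].
    intros n. unfold CPS_term. simpl. ring.
  - unfold CPS_term. simpl. change plus with Cplus. change opp with Copp. C_ring.
Qed.

Lemma sum_f_R0_term_le (f : nat -> R) (i N : nat) :
  (forall k, 0 <= f k) -> (i <= N)%nat -> f i <= sum_f_R0 f N.
Proof.
  intros Hf Hi. induction N as [|N IH].
  - replace i with 0%nat by lia. simpl. lra.
  - rewrite tech5. destruct (Nat.eq_dec i (S N)) as [->|Hne].
    + pose proof (cond_pos_sum f N Hf). lra.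
    + specialize (IH ltac:(lia)). specialize (Hf (S N)). lra.
Qed.

Lemma sum_f_R0_le_upper (f : nat -> R) (m N : nat) :
  (forall k, 0 <= f k) -> (m <= N)%nat -> sum_f_R0 f m <= sum_f_R0 f N.
Proof.
  intros Hf Hm. induction N as [|N IH].
  - replace m with 0%nat by lia. lra.
  - destruct (Nat.eq_dec m (S N)) as [->|Hne]; [lra|].
    rewrite tech5. specialize (IH ltac:(lia)). specialize (Hf (S N)). lra.
Qed.

Lemma Rle_pow_le1 (x : R) (m n : nat) : 0 <= x <= 1 -> (m <= n)%nat -> x ^ n <= x ^ m.
Proof.
  intros Hx Hmn. replace n with (m + (n - m))%nat by lia. rewrite pow_add.
  assert (0 <= x ^ m) by (apply pow_le; lra).
  assert (x ^ (n - m) <= 1) by (rewrite <- (pow1 (n - m)); apply pow_incr; lra).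
  assert (0 <= x ^ (n - m)) by (apply pow_le; lra).
  nra.
Qed.

Section GrowthFromRecursion.

Variables (b : nat -> R) (s N : nat).
Hypothesis s_pos : (1 <= s)%nat.

Definition window_sum (x : nat -> R) (n : nat) : R :=
  sum_f_R0 (fun k => Rabs (b k) * Rabs (x (n - s - k)%nat)) (Nat.min (n - s) N).

Lemma Rabs_rec_le (x : nat -> R) (K c : R) (n : nat) :
  0 <= c <= K ->
  x n = - c * sum_f_R0 (fun k => b k * x (n - s - k)%nat) (Nat.min (n - s) N) ->
  Rabs (x n) <= K * window_sum x n.
Proof.
  intros Hc E. rewrite E, Rabs_mult, Rabs_Ropp, Rabs_pos_eq by lra.
  apply Rmult_le_compat; [lra | apply Rabs_pos | lra|].
  eapply Rle_trans; [apply sum_f_R0_triangle|].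
  right. apply sum_eq. intros k _. apply Rabs_mult.
Qed.

Lemma window_sum_le (x : nat -> R) (M q : R) (m : nat) :
  0 < q <= 1 -> 0 <= M -> (s <= m)%nat ->
  (forall j, (j < m)%nat -> Rabs (x j) <= M * q ^ j) ->
  window_sum x m <= M * q ^ m / q ^ (s + N) * sum_f_R0 (fun k => Rabs (b k)) N.
Proof.
  intros Hq HM Hm Hx.
  assert (HqN : 0 < q ^ (s + N)) by (apply pow_lt; lra).
  assert (HqmN : 0 <= M * q ^ m / q ^ (s + N)).
  { apply Rdiv_le_0_compat; [apply Rmult_le_pos; [lra | apply pow_le; lra] | exact HqN]. }
  unfold window_sum. rewrite scal_sum.
  apply Rle_trans
    with (sum_f_R0 (fun k => Rabs (b k) * (M * q ^ m / q ^ (s + N))) (Nat.min (m - s) N)).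
  - apply sum_Rle. intros k Hk. apply Rmult_le_compat_l; [apply Rabs_pos|].
    eapply Rle_trans; [apply Hx; lia|].
    replace (q ^ m) with (q ^ (m - s - k) * q ^ (s + k)) by (rewrite <- pow_add; f_equal; lia).
    assert (Hsk : q ^ (s + N) <= q ^ (s + k)) by (apply Rle_pow_le1; [lra | lia]).
    assert (0 <= q ^ (m - s - k)) by (apply pow_le; lra).
    unfold Rdiv. rewrite !Rmult_assoc. apply Rmult_le_compat_l; [exact HM|].
    apply Rle_trans with (q ^ (m - s - k) * (q ^ (s + N) * / q ^ (s + N))).
    + rewrite Rinv_r by lra. lra.
    + apply Rmult_le_compat_l; [lra|]. apply Rmult_le_compat_r; [|exact Hsk].
      left. now apply Rinv_0_lt_compat.
  - apply sum_f_R0_le_upper; [|lia].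
    intros k. apply Rmult_le_pos; [apply Rabs_pos | exact HqmN].
Qed.

(** Once [n >= K sum |b_k| / q^(s+N)], the bound [|x_j| <= M q^j] propagates from the
    earlier terms to [x_n]; [M] is chosen to cover the finitely many terms before. *)
Lemma entire_coef_of_window_bound (x : nat -> R) (K : R) (n0 : nat) :
  0 <= K -> (s <= n0)%nat ->
  (forall n, (n0 <= n)%nat -> Rabs (x n) <= K / INR n * window_sum x n) ->
  entire_coef x.
Proof.
  intros HK Hn0 Hrec q Hq.
  set (q' := Rmin q 1).
  assert (Hq' : 0 < q' <= 1) by (split; [apply Rmin_pos; lra | apply Rmin_r]).
  set (Sb := sum_f_R0 (fun k => Rabs (b k)) N).
  assert (HSb : 0 <= Sb) by (apply cond_pos_sum; intros; apply Rabs_pos).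
  assert (HqN : 0 < q' ^ (s + N)) by (apply pow_lt; lra).
  set (T := K * Sb / q' ^ (s + N)).
  assert (HT : 0 <= T) by (apply Rdiv_le_0_compat; [apply Rmult_le_pos|]; lra).
  destruct (nfloor_ex T HT) as [N1 HN1].
  set (M := sum_f_R0 (fun n => Rabs (x n) / q' ^ n) (N1 + n0)).
  assert (Hterm : forall n, 0 <= Rabs (x n) / q' ^ n).
  { intros n. apply Rdiv_le_0_compat; [apply Rabs_pos | apply pow_lt; lra]. }
  assert (HM : 0 <= M) by (apply cond_pos_sum, Hterm).
  assert (Hall : forall m, Rabs (x m) <= M * q' ^ m).
  { intros m. induction m as [m IH] using lt_wf_ind.
    assert (Hqm : 0 < q' ^ m) by (apply pow_lt; lra).
    destruct (Nat.le_gt_cases m (N1 + n0)) as [Hle | Hgt].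
    - pose proof (sum_f_R0_term_le _ m _ Hterm Hle) as H. fold M in H.
      apply Rmult_le_compat_r with (r := q' ^ m) in H; [| lra].
      unfold Rdiv in H. rewrite Rmult_assoc, Rinv_l, Rmult_1_r in H by lra. exact H.
    - assert (Hm : T <= INR m).
      { apply Rle_trans with (INR (N1 + 1)); [rewrite plus_INR; simpl; lra|].
        apply le_INR. lia. }
      assert (Hm0 : 0 < INR m) by (apply lt_0_INR; lia).
      eapply Rle_trans; [apply Hrec; lia|].
      eapply Rle_trans.
      { apply Rmult_le_compat_l; [apply Rdiv_le_0_compat; lra|].
        apply (window_sum_le x M q' m); auto. lia. }
      fold Sb. replace (K / INR m * (M * q' ^ m / q' ^ (s + N) * Sb))
        with (T / INR m * (M * q' ^ m)) by (unfold T; field; lra).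
      assert (T / INR m <= 1) by (exact (proj1 (Rdiv_le_1 T (INR m) Hm0) Hm)).
      assert (0 <= M * q' ^ m) by (apply Rmult_le_pos; lra).
      nra. }
  exists M. split; [exact HM|]. intros n.
  eapply Rle_trans; [apply Hall|].
  apply Rmult_le_compat_l; [exact HM|]. apply pow_incr. split; [lra | apply Rmin_l].
Qed.

End GrowthFromRecursion.

Fixpoint build_seq (step : list R -> nat -> R) (n : nat) : list R :=
  match n with
  | 0%nat => [step [] 0%nat]
  | S m => build_seq step m ++ [step (build_seq step m) (S m)]
  end.

Lemma build_seq_length (step : list R -> nat -> R) (n : nat) :
  length (build_seq step n) = S n.
Proof. induction n as [|n IH]; [reflexivity|]. simpl. rewrite length_app, IH. simpl. lia. Qed.

Lemma build_seq_nth (step : list R -> nat -> R) (m i : nat) : (i <= m)%nat ->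
  nth i (build_seq step m) 0 = nth i (build_seq step i) 0.
Proof.
  intros Hi. induction m as [|m IH].
  - now replace i with 0%nat by lia.
  - destruct (Nat.eq_dec i (S m)) as [->|Hne]; [reflexivity|].
    simpl. rewrite app_nth1 by (rewrite build_seq_length; lia). apply IH. lia.
Qed.

Lemma build_seq_last (step : list R -> nat -> R) (m : nat) :
  nth (S m) (build_seq step (S m)) 0 = step (build_seq step m) (S m).
Proof.
  simpl. rewrite app_nth2 by (rewrite build_seq_length; lia).
  now rewrite build_seq_length, Nat.sub_diag.
Qed.

Lemma A_list_build_seq (n : nat) : A_list n = build_seq A_step n.
Proof. induction n as [|n IH]; [reflexivity|]. simpl. now rewrite IH. Qed.

Lemma B_list_build_seq (n : nat) : B_list n = build_seq B_step n.
Proof. induction n as [|n IH]; [reflexivity|]. simpl. now rewrite IH. Qed.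

Lemma A_rec (n : nat) : (4 <= n)%nat ->
  A n = - (12 / (INR n * (INR n + 7))) *
        sum_f_R0 (fun k => a k * A (n - 4 - k)%nat) (Nat.min (n - 4) 17).
Proof.
  intros Hn. destruct n as [|m]; [lia|].
  unfold A at 1. rewrite A_list_build_seq, build_seq_last.
  assert (Hstep : forall l, A_step l (S m) = - (12 / (INR (S m) * (INR (S m) + 7))) *
    sum_f_R0 (fun k => a k * nth (S m - 4 - k) l 0) (Nat.min (S m - 4) 17)).
  { intros l. do 3 (destruct m as [|m]; [lia|]). reflexivity. }
  rewrite Hstep. f_equal. apply sum_eq. intros k _.
  rewrite build_seq_nth by lia. unfold A. now rewrite A_list_build_seq.
Qed.

Lemma B_rec (n : nat) : (4 <= n)%nat -> n <> 7%nat ->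
  B n = - (12 / (INR n * (INR n - 7))) *
        sum_f_R0 (fun k => a k * B (n - 4 - k)%nat) (Nat.min (n - 4) 17).
Proof.
  intros Hn H7. destruct n as [|m]; [lia|].
  unfold B at 1. rewrite B_list_build_seq, build_seq_last.
  assert (Hstep : forall l, B_step l (S m) = - (12 / (INR (S m) * (INR (S m) - 7))) *
    sum_f_R0 (fun k => a k * nth (S m - 4 - k) l 0) (Nat.min (S m - 4) 17)).
  { intros l. do 3 (destruct m as [|m]; [lia|]).
    destruct m as [|[|[|[|m]]]]; [reflexivity | reflexivity | reflexivity | lia | reflexivity]. }
  rewrite Hstep. f_equal. apply sum_eq. intros k _.
  rewrite build_seq_nth by lia. unfold B. now rewrite B_list_build_seq.
Qed.

Lemma entire_coef_A : entire_coef A.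
Proof.
  apply (entire_coef_of_window_bound a 4 17 ltac:(lia) A 12 8); [lra | lia|].
  intros n Hn.
  apply Rabs_rec_le with (c := 12 / (INR n * (INR n + 7))); [| now apply A_rec; lia].
  assert (H8 : 8 <= INR n) by (replace 8 with (INR 8) by (simpl; lra); now apply le_INR).
  split; [apply Rdiv_le_0_compat; nra|].
  unfold Rdiv. apply Rmult_le_compat_l; [lra|]. apply Rinv_le_contravar; nra.
Qed.

Lemma entire_coef_B : entire_coef B.
Proof.
  apply (entire_coef_of_window_bound a 4 17 ltac:(lia) B 12 8); [lra | lia|].
  intros n Hn.
  apply Rabs_rec_le with (c := 12 / (INR n * (INR n - 7))); [| now apply B_rec; lia].
  assert (H8 : 8 <= INR n) by (replace 8 with (INR 8) by (simpl; lra); now apply le_INR).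
  split; [apply Rdiv_le_0_compat; nra|].
  unfold Rdiv. apply Rmult_le_compat_l; [lra|]. apply Rinv_le_contravar; nra.
Qed.

Lemma A_ode_rec (n : nat) :
  INR (S n) * (INR n + 8) * A (S n) + 12 * shiftk 3 (conv a 17 A) n = 0.
Proof.
  unfold shiftk. destruct (Nat.leb 3 n) eqn:E.
  - apply Nat.leb_le in E. rewrite conv_min, (A_rec (S n)) by lia.
    replace (S n - 4)%nat with (n - 3)%nat by lia.
    rewrite S_INR. pose proof (pos_INR n). field. lra.
  - apply Nat.leb_gt in E.
    destruct n as [|[|[|n]]];
      [change (A 1) with 0 | change (A 2) with 0 | change (A 3) with 0 | lia];
      ring.
Qed.

(** At the resonant index [n = 7], where [B_step] sets [B_7 = 0], the equation holds
    because the forcing term [a_0 B_3 + a_1 B_2 + a_2 B_1 + a_3 B_0 = a_3] vanishes. *)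
Lemma B_ode_rec (n : nat) :
  INR (S n) * (INR n - 6) * B (S n) + 12 * shiftk 3 (conv a 17 B) n = 0.
Proof.
  unfold shiftk. destruct (Nat.leb 3 n) eqn:E.
  - apply Nat.leb_le in E. rewrite conv_min.
    destruct (Nat.eq_dec n 6) as [->|Hn6].
    + change (B 7) with 0. simpl. change (a 3) with 0. change (B 3) with 0.
      change (B 2) with 0. change (B 1) with 0. ring.
    + rewrite (B_rec (S n)) by lia.
      replace (S n - 4)%nat with (n - 3)%nat by lia.
      assert (INR n <> 6) by (intros H; apply Hn6, INR_eq; rewrite H; simpl; lra).
      rewrite S_INR. pose proof (pos_INR n). field. lra.
  - apply Nat.leb_gt in E.
    destruct n as [|[|[|n]]];
      [change (B 1) with 0 | change (B 2) with 0 | change (B 3) with 0 | lia];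
      ring.
Qed.

Lemma CPS_ode (c : nat -> R) (al : R) (z : C) :
  entire_coef c ->
  (forall n, INR (S n) * (INR n + al) * c (S n) + 12 * shiftk 3 (conv a 17 c) n = 0) ->
  (al * CPS (dcoef c) z + z * CPS (dcoef (dcoef c)) z + 12 * (z ^ 3 * (P z * CPS c z)))%C
  = RtoC 0.
Proof.
  intros Hc Hrec. unfold P.
  rewrite CPS_conv, <- CPS_shiftk, <- CPS_shift1, <- !CPS_scal, <- !CPS_plus;
    repeat first [ assumption | apply entire_coef_dcoef | apply entire_coef_conv
                 | apply entire_coef_shiftk | apply entire_coef_shift1
                 | apply entire_coef_scal | apply entire_coef_plus ].
  apply CPS_eq_0. intros n. rewrite <- (Hrec n). unfold shift1, dcoef.
  destruct n as [|m]; [simpl; ring|]. rewrite (S_INR (S m)). ring.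
Qed.

Lemma is_derive_C_AbsRing (f : C -> C) (z l : C) :
  is_C_derive f z l <-> @is_derive C_AbsRing (AbsRing_NormedModule C_AbsRing) f z l.
Proof.
  split; intros [_ Hd]; split; [apply is_linear_scal_l | | apply is_linear_scal_l |];
    intros x Hx eps; exact (Hd x Hx eps).
Qed.

Lemma is_derive_Cplus (f g : C -> C) (z lf lg : C) :
  is_C_derive f z lf -> is_C_derive g z lg -> is_C_derive (fun w => f w + g w)%C z (lf + lg)%C.
Proof. intros Hf Hg. exact (is_derive_plus f g z lf lg Hf Hg). Qed.

Lemma is_derive_Cminus (f g : C -> C) (z lf lg : C) :
  is_C_derive f z lf -> is_C_derive g z lg -> is_C_derive (fun w => f w - g w)%C z (lf - lg)%C.
Proof. intros Hf Hg. exact (is_derive_minus f g z lf lg Hf Hg). Qed.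

Lemma is_derive_Cmult (f g : C -> C) (z lf lg : C) :
  is_C_derive f z lf -> is_C_derive g z lg ->
  is_C_derive (fun w => f w * g w)%C z (lf * g z + f z * lg)%C.
Proof.
  intros Hf Hg. apply (proj2 (is_derive_C_AbsRing _ _ _)).
  exact (is_derive_mult f g z lf lg (proj1 (is_derive_C_AbsRing _ _ _) Hf)
           (proj1 (is_derive_C_AbsRing _ _ _) Hg) Cmult_comm).
Qed.

Lemma is_derive_Cconst (k z : C) : is_C_derive (fun _ => k) z (RtoC 0).
Proof.
  apply (proj2 (is_derive_C_AbsRing _ _ _)).
  exact (@is_derive_const C_AbsRing (AbsRing_NormedModule C_AbsRing) k z).
Qed.

Lemma is_derive_Cid (z : C) : is_C_derive (fun w => w) z (RtoC 1).
Proof. apply (proj2 (is_derive_C_AbsRing _ _ _)). exact (is_derive_id z). Qed.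

Lemma is_derive_Ccomp (f g : C -> C) (z df dg : C) :
  is_C_derive f (g z) df -> is_C_derive g z dg -> is_C_derive (fun w => f (g w)) z (dg * df)%C.
Proof.
  intros Hf Hg. exact (is_derive_comp f g z df dg Hf (proj1 (is_derive_C_AbsRing _ _ _) Hg)).
Qed.
Lemma is_derive_Cscal (k : C) (f : C -> C) (z l : C) :
  is_C_derive f z l -> is_C_derive (fun w => k * f w)%C z (k * l)%C.
Proof.
  intros H. replace (k * l)%C with (0 * f z + k * l)%C by ring.
  exact (is_derive_Cmult _ _ z _ _ (is_derive_Cconst k z) H).
Qed.

Lemma is_derive_Cpow (n : nat) (z : C) :
  is_C_derive (fun w => w ^ n)%C z (INR n * z ^ pred n)%C.
Proof.
  induction n as [|n IH].
  - replace (INR 0 * z ^ pred 0)%C with (RtoC 0) by (simpl; ring).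
    exact (is_derive_Cconst (RtoC 1) z).
  - eapply is_derive_ext; [intros w; symmetry; apply Cpow_S|].
    replace (INR (S n) * z ^ pred (S n))%C with (1 * z ^ n + z * (INR n * z ^ pred n))%C.
    + exact (is_derive_Cmult _ _ z _ _ (is_derive_Cid z) IH).
    + destruct n as [|n]; [simpl; ring|]. rewrite (S_INR (S n)), RtoC_plus. simpl. ring.
Qed.

Lemma is_derive_Cinv (z : C) : z <> RtoC 0 -> is_C_derive Cinv z (- / (z * z))%C.
Proof.
  intros Hz. set (m := Cmod z). assert (Hm : 0 < m) by (apply Cmod_gt_0; exact Hz).
  apply (is_C_derive_of_quadratic_remainder _ _ _ (2 / m ^ 3) (m / 2)); [lra|].
  intros w Hw. set (d := Cmod (w - z)%C) in *.
  assert (Hwm : m / 2 <= Cmod w).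
  { assert (m <= Cmod w + d); [|lra].
    unfold m, d. replace z with (w + - (w - z))%C at 1 by ring.
    eapply Rle_trans; [apply Cmod_triangle|]. rewrite Cmod_opp. lra. }
  assert (Hw0 : w <> RtoC 0) by (intros ->; rewrite Cmod_0 in Hwm; lra).
  replace (/ w - / z - (w - z) * - / (z * z))%C with ((w - z) * (w - z) / (w * (z * z)))%C
    by (field; auto).
  unfold Cdiv.
  rewrite !Cmod_mult, Cmod_inv, !Cmod_mult by (apply Cmult_neq_0; auto using Cmult_neq_0).
  fold d m.
  assert (0 < m ^ 3 / 2) by (apply Rdiv_lt_0_compat; [apply pow_lt|]; lra).
  assert (Hle : m ^ 3 / 2 <= Cmod w * (m * m)) by (simpl; nra).
  replace (2 / m ^ 3 * d ^ 2) with (d * d * / (m ^ 3 / 2)) by (field; lra).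
  apply Rmult_le_compat_l; [nra|]. apply Rinv_le_contravar; lra.
Qed.

Lemma is_derive_Cinv_pow (n : nat) (z : C) :
  z <> RtoC 0 -> is_C_derive (fun w => / w ^ n)%C z (- INR n * / z ^ S n)%C.
Proof.
  intros Hz.
  pose proof (is_derive_Ccomp Cinv (fun w => w ^ n)%C z _ _
    (is_derive_Cinv _ (Cpow_nz z n Hz)) (is_derive_Cpow n z)) as H.
  match goal with H : is_derive _ _ ?l |- is_derive _ _ ?l' => replace l' with l end; [exact H|].
  destruct n as [|n]; [simpl; C_field; exact Hz|].
  simpl pred. rewrite !Cpow_S. C_field. split; [apply Cpow_nz|]; exact Hz.
Qed.

Lemma Cmult_eq_0_l (u v : C) : u <> RtoC 0 -> (u * v)%C = RtoC 0 -> v = RtoC 0.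
Proof.
  intros Hu H. replace v with (/ u * (u * v))%C by (field; exact Hu).
  rewrite H. ring.
Qed.

Lemma frobenius_algebra (mu : R) (z h h1 h2 g g1 g2 p : C) :
  z <> RtoC 0 -> (2 * mu * g1 + z * g2 + 12 * (z ^ 3 * (p * g)))%C = RtoC 0 ->
  (h1 * z = mu * h)%C -> (h2 * z * z = 12 * h)%C ->
  (h2 * g + 2 * (h1 * g1) + h * g2 + 12 * ((- / z ^ 2 + z ^ 2 * p) * (h * g)))%C = RtoC 0.
Proof.
  intros Hz Hode H1 H2.
  apply (Cmult_eq_0_l (z * z)); [now apply Cmult_neq_0|].
  assert (Hzz : (z * z * / z ^ 2)%C = RtoC 1) by (simpl; field; exact Hz).
  transitivity ((h2 * z * z) * g + 2 * ((h1 * z) * z * g1) + z * z * h * g2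
                - 12 * (z * z * / z ^ 2) * h * g + 12 * z ^ 4 * (p * h * g))%C; [ring|].
  rewrite H1, H2, Hzz.
  transitivity (h * z * (2 * mu * g1 + z * g2 + 12 * (z ^ 3 * (p * g))))%C; [ring|].
  rewrite Hode. ring.
Qed.

(** [h], [h1], [h2] play the role of [w^mu] and its first two derivatives at [z],
    with [mu (mu - 1) = 12]. *)
Lemma frobenius_ode (c : nat -> R) (mu : R) (z h h1 h2 : C) :
  z <> RtoC 0 -> entire_coef c ->
  (forall n, INR (S n) * (INR n + 2 * mu) * c (S n) + 12 * shiftk 3 (conv a 17 c) n = 0) ->
  (h1 * z = mu * h)%C -> (h2 * z * z = 12 * h)%C ->
  (h2 * CPS c z + 2 * (h1 * CPS (dcoef c) z) + h * CPS (dcoef (dcoef c)) z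
   + 12 * (Y0 z * (h * CPS c z)))%C = RtoC 0.
Proof.
  intros Hz Hc Hrec H1 H2. apply (frobenius_algebra mu); auto.
  rewrite <- RtoC_mult. exact (CPS_ode c (2 * mu) z Hc Hrec).
Qed.

Lemma solves_at_intro (G G1 G2 : C -> C) (z : C) (eps : posreal) :
  (forall w, Cmod (w - z)%C < eps -> is_C_derive G w (G1 w)) ->
  is_C_derive G1 z (G2 z) -> (G2 z + 12 * (Y0 z * G z))%C = RtoC 0 ->
  solves_at G z.
Proof.
  intros HG HG1 Hode.
  assert (Hloc : @locally (AbsRing_UniformSpace C_AbsRing) z (fun w => G1 w = C_derive G w)).
  { exists eps. intros w Hw. symmetry. apply is_C_derive_unique, HG, Hw. }
  assert (HG' : is_C_derive (C_derive G) z (G2 z)) by exact (is_derive_ext_loc _ _ _ _ Hloc HG1).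
  unfold solves_at. rewrite (is_C_derive_unique _ _ _ HG').
  split; [| split; [exact HG' | exact Hode]].
  exists eps. intros w Hw. rewrite (is_C_derive_unique _ _ _ (HG w Hw)). exact (HG w Hw).
Qed.

Definition frobenius_deriv (h h1 : C -> C) (c : nat -> R) (w : C) : C :=
  (h1 w * CPS c w + h w * CPS (dcoef c) w)%C.

Lemma is_derive_frobenius (h h1 : C -> C) (c : nat -> R) (z : C) :
  entire_coef c -> is_C_derive h z (h1 z) ->
  is_C_derive (fun w => h w * CPS c w)%C z (frobenius_deriv h h1 c z).
Proof. intros Hc Hh. exact (is_derive_Cmult _ _ z _ _ Hh (is_derive_CPS c z Hc)). Qed.

Lemma is_derive_frobenius_deriv (h h1 h2 : C -> C) (c : nat -> R) (z : C) :
  entire_coef c -> is_C_derive h z (h1 z) -> is_C_derive h1 z (h2 z) ->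
  is_C_derive (frobenius_deriv h h1 c) z
    (h2 z * CPS c z + 2 * (h1 z * CPS (dcoef c) z) + h z * CPS (dcoef (dcoef c)) z)%C.
Proof.
  intros Hc Hh Hh1.
  pose proof (is_derive_Cplus _ _ z _ _
    (is_derive_Cmult _ _ z _ _ Hh1 (is_derive_CPS c z Hc))
    (is_derive_Cmult _ _ z _ _ Hh (is_derive_CPS (dcoef c) z (entire_coef_dcoef c Hc)))) as H.
  eapply is_derive_ext; [intros w; reflexivity|].
  match goal with |- is_derive _ _ ?l => replace l with
    (h2 z * CPS c z + h1 z * CPS (dcoef c) z
     + (h1 z * CPS (dcoef c) z + h z * CPS (dcoef (dcoef c)) z))%C by ring end.
  exact H.
Qed.

Lemma solves_at_frobenius (h h1 h2 : C -> C) (c : nat -> R) (mu : R) (z : C) :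
  z <> RtoC 0 -> entire_coef c ->
  (forall n, INR (S n) * (INR n + 2 * mu) * c (S n) + 12 * shiftk 3 (conv a 17 c) n = 0) ->
  (forall w, w <> RtoC 0 -> is_C_derive h w (h1 w) /\ is_C_derive h1 w (h2 w)) ->
  (h1 z * z = mu * h z)%C -> (h2 z * z * z = 12 * h z)%C ->
  solves_at (fun w => h w * CPS c w)%C z.
Proof.
  intros Hz Hc Hrec Hh H1 H2.
  assert (Hm : 0 < Cmod z) by (apply Cmod_gt_0, Hz).
  apply (solves_at_intro _ (frobenius_deriv h h1 c) (fun w =>
    h2 w * CPS c w + 2 * (h1 w * CPS (dcoef c) w) + h w * CPS (dcoef (dcoef c)) w)%C z
    (mkposreal _ Hm)).
  - intros w Hw. apply is_derive_frobenius; [exact Hc|]. apply Hh.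
    intros ->. simpl in Hw. rewrite <- Cmod_opp in Hw. replace (- (0 - z))%C with z in Hw by ring.
    lra.
  - apply is_derive_frobenius_deriv; auto; apply Hh, Hz.
  - exact (frobenius_ode c mu z _ _ _ Hz Hc Hrec H1 H2).
Qed.

Lemma is_derive_ray (f : C -> C) (p : C -> R) (z l : C) (t : R) :
  (forall u, Rabs (p u) <= Cmod u) ->
  (forall u v w (k : R), p (u - v - k * w)%C = p u - p v - k * p w) ->
  is_C_derive f (t * z)%C l ->
  is_derive (fun s : R => p (f (s * z)%C)) t (p (l * z)%C).
Proof.
  intros Hp Hlin Hf%is_derive_C_AbsRing. destruct Hf as [_ Hd].
  split; [apply is_linear_scal_l|].
  intros x Hx.
  apply (@is_filter_lim_locally_unique R_AbsRing (AbsRing_NormedModule R_AbsRing)) in Hx.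
  subst x. intros eps.
  assert (Hl : is_filter_lim (@locally (AbsRing_UniformSpace C_AbsRing) (t * z)%C) (t * z)%C)
    by (intros P HP; exact HP).
  pose proof (Cmod_ge_0 z) as Hz.
  assert (He : 0 < eps / (Cmod z + 1)) by (apply Rdiv_lt_0_compat; [apply cond_pos | lra]).
  destruct (Hd _ Hl (mkposreal _ He)) as [del Hdel].
  assert (Hd' : 0 < del / (Cmod z + 1)) by (apply Rdiv_lt_0_compat; [apply cond_pos | lra]).
  exists (mkposreal _ Hd'). intros s Hs.
  change (Rabs (s - t) < del / (Cmod z + 1)) in Hs.
  change (Rabs (p (f (s * z)%C) - p (f (t * z)%C) - (s - t) * p (l * z)%C) <= eps * Rabs (s - t)).
  assert (Hsz : (s * z - t * z)%C = ((s - t)%R * z)%C) by (rewrite RtoC_minus; ring).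
  assert (Hball : Cmod (s * z - t * z)%C < del).
  { rewrite Hsz, Cmod_mult, Cmod_R.
    apply Rle_lt_trans with (Rabs (s - t) * (Cmod z + 1)).
    { apply Rmult_le_compat_l; [apply Rabs_pos | lra]. }
    apply Rmult_lt_compat_r with (r := Cmod z + 1) in Hs; [| lra].
    replace (del / (Cmod z + 1) * (Cmod z + 1)) with (pos del) in Hs by (field; lra). exact Hs. }
  specialize (Hdel _ Hball).
  change (Cmod (f (s * z) - f (t * z) - (s * z - t * z) * l)%C
          <= eps / (Cmod z + 1) * Cmod (s * z - t * z)%C) in Hdel.
  rewrite Hsz, Cmod_mult, Cmod_R in Hdel.
  replace ((s - t)%R * z * l)%C with ((s - t)%R * (l * z))%C in Hdel by ring.
  rewrite <- Hlin. eapply Rle_trans; [apply Hp|]. eapply Rle_trans; [exact Hdel|].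
  apply Rle_trans with (eps / (Cmod z + 1) * (Rabs (s - t) * (Cmod z + 1))).
  - apply Rmult_le_compat_l; [lra|]. apply Rmult_le_compat_l; [apply Rabs_pos | lra].
  - right. field. lra.
Qed.

(** Mean value theorem for the real and imaginary parts along the segment [[0, z]]. *)
Lemma C_const_of_derive_0 (f : C -> C) :
  (forall w, is_C_derive f w (RtoC 0)) -> forall z, f z = f (RtoC 0).
Proof.
  intros Hf z.
  assert (Hray : forall p : C -> R, (forall u, Rabs (p u) <= Cmod u) ->
            (forall u v w (k : R), p (u - v - k * w)%C = p u - p v - k * p w) ->
            p (f z) = p (f (RtoC 0))).
  { intros p Hp Hlin.
    assert (Hp0 : p (RtoC 0) = 0).
    { pose proof (Hlin (RtoC 0) (RtoC 0) (RtoC 0) 0) as H.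
      replace (0 - 0 - 0 * 0)%C with (RtoC 0) in H by ring. lra. }
    assert (Hg : forall t, is_derive (fun s : R => p (f (s * z)%C)) t 0).
    { intros t. pose proof (is_derive_ray f p z (RtoC 0) t Hp Hlin (Hf _)) as H.
      replace (0 * z)%C with (RtoC 0) in H by ring. rewrite Hp0 in H. exact H. }
    destruct (MVT_gen (fun s : R => p (f (s * z)%C)) 0 1 (fun _ => 0)) as [c [_ Hc]].
    - intros x _. apply Hg.
    - intros x _. apply continuity_pt_filterlim.
      apply (ex_derive_continuous (fun s : R => p (f (s * z)%C)) x). exists 0. apply Hg.
    - replace (1 * z)%C with z in Hc by ring. replace (0 * z)%C with (RtoC 0) in Hc by ring.
      lra. }
  apply injective_projections; apply Hray.
  - apply re_le_Cmod.
  - intros u v w k. simpl. ring.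
  - intros u. pose proof (Rmax_Cmod u). pose proof (Rmax_r (Rabs (fst u)) (Rabs (snd u))). lra.
  - intros u v w k. simpl. ring.
Qed.

Lemma circle_point_near (rho del : R) :
  0 < rho -> 0 < del -> exists w : C, Cmod w = rho /\ 0 < Cmod (w - rho)%C < del.
Proof.
  intros Hr Hd.
  set (s := Rmin 1 (del / (4 * rho))).
  assert (Hs0 : 0 < s) by (apply Rmin_pos; [lra | apply Rdiv_lt_0_compat; lra]).
  assert (Hs1 : s <= 1) by apply Rmin_l.
  assert (Hsd : 4 * rho * s <= del).
  { assert (H : s <= del / (4 * rho)) by apply Rmin_r.
    apply Rmult_le_compat_l with (r := 4 * rho) in H; [| lra].
    replace (4 * rho * (del / (4 * rho))) with del in H by (field; lra). exact H. }
  set (q := 1 + s ^ 2).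
  assert (Hq : 1 <= q) by (unfold q; pose proof (pow2_ge_0 s); lra).
  exists (rho * (1 - s ^ 2) / q, 2 * rho * s / q). split.
  - unfold Cmod. cbn [fst snd].
    replace ((rho * (1 - s ^ 2) / q) ^ 2 + (2 * rho * s / q) ^ 2) with (rho ^ 2)
      by (unfold q; field; pose proof (pow2_ge_0 s); lra).
    apply sqrt_pow2. lra.
  - unfold Cmod. cbn [fst snd Cminus Cplus Copp RtoC].
    set (X := (rho * (1 - s ^ 2) / q + - rho) ^ 2 + (2 * rho * s / q + - 0) ^ 2).
    assert (HX : X = (2 * rho * s) ^ 2 / q) by (unfold X, q; field; pose proof (pow2_ge_0 s); lra).
    assert (HX0 : 0 < X).
    { rewrite HX. apply Rdiv_lt_0_compat; [| lra]. apply pow_lt. nra. }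
    assert (HXd : X < del ^ 2).
    { rewrite HX. apply Rle_lt_trans with ((2 * rho * s) ^ 2).
      - unfold Rdiv. rewrite <- (Rmult_1_r ((2 * rho * s) ^ 2)) at 2.
        apply Rmult_le_compat_l; [apply pow2_ge_0|].
        rewrite <- Rinv_1. apply Rinv_le_contravar; lra.
      - assert (0 < rho * s) by nra. simpl. nra. }
    split; [now apply sqrt_lt_R0|].
    rewrite <- (sqrt_pow2 del) by lra. apply sqrt_lt_1; lra.
Qed.

Lemma derive_0_of_vanishing_on_circle (F : C -> C) (rho : R) (L : C) :
  0 < rho -> is_C_derive F (RtoC rho) L ->
  (forall w, Cmod w = rho -> F w = RtoC 0) -> L = RtoC 0.
Proof.
  intros Hr [_ Hd] HF.
  assert (Hl : is_filter_lim (@locally (AbsRing_UniformSpace C_AbsRing) (RtoC rho)) (RtoC rho))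
    by (intros P HP; exact HP).
  apply Cmod_eq_0. apply Rle_antisym; [| apply Cmod_ge_0]. apply Rnot_lt_le. intros HL.
  assert (He : 0 < Cmod L / 2) by lra.
  destruct (Hd _ Hl (mkposreal _ He)) as [del Hdel].
  destruct (circle_point_near rho del Hr (cond_pos del)) as [w [Hw [Hwr0 Hwr]]].
  specialize (Hdel w Hwr).
  change (Cmod (F w - F rho - (w - rho) * L)%C <= Cmod L / 2 * Cmod (w - rho)%C) in Hdel.
  rewrite (HF w Hw), (HF (RtoC rho)) in Hdel by (rewrite Cmod_R; apply Rabs_pos_eq; lra).
  replace (0 - 0 - (w - rho) * L)%C with (- ((w - rho) * L))%C in Hdel by ring.
  rewrite Cmod_opp, Cmod_mult in Hdel. nra.
Qed.

Lemma is_series_G1_term (z : C) : is_series (G1_term z) (z ^ 4 * CPS A z)%C.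
Proof.
  eapply is_series_ext; [| exact (is_series_scal _ _ _ (is_series_CPS A z entire_coef_A))].
  intros n. unfold CPS_term, G1_term. rewrite Cpow_add_r. change scal with Cmult. C_ring.
Qed.

Lemma is_series_G2_term (z : C) : is_series (G2_term z) (/ z ^ 3 * CPS B z)%C.
Proof.
  eapply is_series_ext; [| exact (is_series_scal _ _ _ (is_series_CPS B z entire_coef_B))].
  intros n. unfold CPS_term, G2_term, Cdiv. change scal with Cmult. C_ring.
Qed.

Lemma G1_eq : G1 = (fun w => w ^ 4 * CPS A w)%C.
Proof.
  apply functional_extensionality. intros w. exact (CSeries_unique _ _ (is_series_G1_term w)).
Qed.

Lemma G2_eq : G2 = (fun w => / w ^ 3 * CPS B w)%C.
Proof.
  apply functional_extensionality. intros w. exact (CSeries_unique _ _ (is_series_G2_term w)).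
Qed.

Lemma is_derive_pow4 (w : C) : is_C_derive (fun w => w ^ 4)%C w (4 * w ^ 3)%C.
Proof.
  replace (4 * w ^ 3)%C with (INR 4 * w ^ pred 4)%C
    by (replace (INR 4) with 4 by (simpl; ring); simpl pred; ring). apply is_derive_Cpow.
Qed.

Lemma is_derive_4pow3 (w : C) : is_C_derive (fun w => 4 * w ^ 3)%C w (12 * w ^ 2)%C.
Proof.
  replace (12 * w ^ 2)%C with (4 * (INR 3 * w ^ pred 3))%C
    by (replace (INR 3) with 3 by (simpl; ring); simpl pred; ring).
  apply is_derive_Cscal, is_derive_Cpow.
Qed.

Lemma is_derive_inv_pow3 (w : C) :
  w <> RtoC 0 -> is_C_derive (fun w => / w ^ 3)%C w (RtoC (-3) * / w ^ 4)%C.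
Proof.
  intros Hw. replace (RtoC (-3)) with (- INR 3)%C by (rewrite <- RtoC_opp; f_equal; simpl; ring).
  exact (is_derive_Cinv_pow 3 w Hw).
Qed.

Lemma is_derive_m3_inv_pow4 (w : C) :
  w <> RtoC 0 -> is_C_derive (fun w => RtoC (-3) * / w ^ 4)%C w (12 * / w ^ 5)%C.
Proof.
  intros Hw. replace (12 * / w ^ 5)%C with (RtoC (-3) * (- INR 4 * / w ^ S 4))%C.
  - exact (is_derive_Cscal _ _ w _ (is_derive_Cinv_pow 4 w Hw)).
  - replace (INR 4) with 4 by (simpl; ring). field. exact Hw.
Qed.

Lemma solves_at_G1 (z : C) : z <> RtoC 0 -> solves_at G1 z.
Proof.
  intros Hz. rewrite G1_eq.
  apply (solves_at_frobenius _ (fun w => 4 * w ^ 3)%C (fun w => 12 * w ^ 2)%C A 4);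
    auto using entire_coef_A.
  - intros n. replace (INR n + 2 * 4) with (INR n + 8) by ring. apply A_ode_rec.
  - intros w _. split; [apply is_derive_pow4 | apply is_derive_4pow3].
  - simpl. ring.
  - simpl. ring.
Qed.

Lemma solves_at_G2 (z : C) : z <> RtoC 0 -> solves_at G2 z.
Proof.
  intros Hz. rewrite G2_eq.
  apply (solves_at_frobenius _ (fun w => RtoC (-3) * / w ^ 4)%C (fun w => 12 * / w ^ 5)%C B (-3));
    auto using entire_coef_B.
  - intros n. replace (INR n + 2 * -3) with (INR n - 6) by ring. apply B_ode_rec.
  - intros w Hw. split; [apply is_derive_inv_pow3 | apply is_derive_m3_inv_pow4]; exact Hw.
  - simpl. field. exact Hz.
  - simpl. field. exact Hz.
Qed.

(** [G1 G2' - G2 G1'] in terms of the entire factors, using [z^4 * z^-3 = z]. *)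
Definition wronskian_core (w : C) : C :=
  (RtoC (-7) * (CPS A w * CPS B w)
   + w * (CPS A w * CPS (dcoef B) w - CPS B w * CPS (dcoef A) w))%C.

Lemma wronskian_algebra (w g g1 g2 k k1 k2 p : C) :
  (8 * g1 + w * g2 + 12 * (w ^ 3 * (p * g)))%C = RtoC 0 ->
  (RtoC (-6) * k1 + w * k2 + 12 * (w ^ 3 * (p * k)))%C = RtoC 0 ->
  (RtoC (-7) * (g1 * k + g * k1)
   + (1 * (g * k1 - k * g1) + w * ((g1 * k1 + g * k2) - (k1 * g1 + k * g2))))%C = RtoC 0.
Proof.
  intros Hg Hk.
  transitivity (g * (RtoC (-6) * k1 + w * k2 + 12 * (w ^ 3 * (p * k)))
                - k * (8 * g1 + w * g2 + 12 * (w ^ 3 * (p * g))))%C; [ring|].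
  rewrite Hg, Hk. ring.
Qed.

Lemma is_derive_wronskian_core (w : C) : is_C_derive wronskian_core w (RtoC 0).
Proof.
  pose proof entire_coef_A as HA. pose proof entire_coef_B as HB.
  pose proof (entire_coef_dcoef _ HA) as HA1. pose proof (entire_coef_dcoef _ HB) as HB1.
  pose proof (is_derive_Cplus _ _ w _ _
    (is_derive_Cscal (RtoC (-7)) _ w _
       (is_derive_Cmult _ _ w _ _ (is_derive_CPS A w HA) (is_derive_CPS B w HB)))
    (is_derive_Cmult _ _ w _ _ (is_derive_Cid w)
       (is_derive_Cminus _ _ w _ _
          (is_derive_Cmult _ _ w _ _ (is_derive_CPS A w HA) (is_derive_CPS _ w HB1))
          (is_derive_Cmult _ _ w _ _ (is_derive_CPS B w HB) (is_derive_CPS _ w HA1)))))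
    as H.
  cbv beta in H. rewrite (wronskian_algebra w _ _ _ _ _ _ (P w)) in H; [exact H | |].
  - exact (CPS_ode A 8 w HA A_ode_rec).
  - exact (CPS_ode B (-6) w HB B_ode_rec).
Qed.

Lemma wronskian_core_eq (z : C) : wronskian_core z = RtoC (-7).
Proof.
  rewrite (C_const_of_derive_0 _ is_derive_wronskian_core z).
  unfold wronskian_core. rewrite !CPS_at_0. change (A 0) with 1. change (B 0) with 1. ring.
Qed.

Lemma is_derive_G1 (z : C) :
  is_C_derive G1 z (frobenius_deriv (fun w => w ^ 4)%C (fun w => 4 * w ^ 3)%C A z).
Proof. rewrite G1_eq. apply is_derive_frobenius; [exact entire_coef_A | apply is_derive_pow4]. Qed.

Lemma is_derive_G2 (z : C) : z <> RtoC 0 ->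
  is_C_derive G2 z (frobenius_deriv (fun w => / w ^ 3)%C (fun w => RtoC (-3) * / w ^ 4)%C B z).
Proof.
  intros Hz. rewrite G2_eq.
  apply is_derive_frobenius; [exact entire_coef_B | now apply is_derive_inv_pow3].
Qed.

Lemma wronskian_G1_G2 (z : C) : z <> RtoC 0 ->
  (G1 z * C_derive G2 z - G2 z * C_derive G1 z)%C = RtoC (-7).
Proof.
  intros Hz.
  rewrite (is_C_derive_unique _ _ _ (is_derive_G1 z)),
    (is_C_derive_unique _ _ _ (is_derive_G2 z Hz)).
  rewrite <- (wronskian_core_eq z), G1_eq, G2_eq. unfold frobenius_deriv, wronskian_core.
  field. exact Hz.
Qed.

Lemma G1_G2_independent (rho : R) (c1 c2 : C) : 0 < rho ->
  (forall z : C, Cmod z = rho -> (c1 * G1 z + c2 * G2 z)%C = RtoC 0) ->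
  c1 = RtoC 0 /\ c2 = RtoC 0.
Proof.
  intros Hr H.
  assert (Hr0 : RtoC rho <> RtoC 0) by (intros E; apply RtoC_inj in E; lra).
  pose proof (H rho ltac:(rewrite Cmod_R; apply Rabs_pos_eq; lra)) as HF.
  pose proof (derive_0_of_vanishing_on_circle _ rho _ Hr
    (is_derive_Cplus _ _ _ _ _ (is_derive_Cscal c1 _ _ _ (is_derive_G1 rho))
                              (is_derive_Cscal c2 _ _ _ (is_derive_G2 rho Hr0))) H) as HF'.
  pose proof (wronskian_G1_G2 rho Hr0) as HW.
  rewrite <- (is_C_derive_unique _ _ _ (is_derive_G1 rho)),
          <- (is_C_derive_unique _ _ _ (is_derive_G2 rho Hr0)) in HF'.
  set (g1 := G1 rho) in *. set (g2 := G2 rho) in *.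
  set (d1 := C_derive G1 rho) in *. set (d2 := C_derive G2 rho) in *.
  assert (H7 : RtoC (-7) <> RtoC 0) by (intros E; apply RtoC_inj in E; lra).
  split.
  - apply (Cmult_eq_0_l (RtoC (-7))); [exact H7|]. rewrite <- HW.
    transitivity (d2 * (c1 * g1 + c2 * g2) - g2 * (c1 * d1 + c2 * d2))%C; [ring|].
    rewrite HF, HF'. ring.
  - apply (Cmult_eq_0_l (RtoC (-7))); [exact H7|]. rewrite <- HW.
    transitivity (g1 * (c1 * d1 + c2 * d2) - d1 * (c1 * g1 + c2 * g2))%C; [ring|].
    rewrite HF, HF'. ring.
Qed.

Theorem lemma6p7 :
  (forall z : C, Cmod z = r ->
     @is_series C_AbsRing C_NormedModule (G1_term z) (G1 z) /\
     @is_series C_AbsRing C_NormedModule (G2_term z) (G2 z) /\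
     solves_at G1 z /\ solves_at G2 z /\
     Cminus (Cmult (G1 z) (C_derive G2 z)) (Cmult (G2 z) (C_derive G1 z)) = RtoC (-7)) /\
  (forall c1 c2 : C,
     (forall z : C, Cmod z = r -> Cplus (Cmult c1 (G1 z)) (Cmult c2 (G2 z)) = RtoC 0) ->
     c1 = RtoC 0 /\ c2 = RtoC 0).
Proof.
  split; [| intros c1 c2; apply G1_G2_independent; unfold r; lra].
  intros z Hz.
  assert (Hz0 : z <> RtoC 0) by (intros ->; rewrite Cmod_0 in Hz; unfold r in Hz; lra).
  split; [rewrite G1_eq; apply is_series_G1_term|].
  split; [rewrite G2_eq; apply is_series_G2_term|].
  auto using solves_at_G1, solves_at_G2, wronskian_G1_G2.
Qed.
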